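(* Let $K$ be a field of characteristic zero, let $A=K[Y][X;\mathrm{id}_{K[Y]},\frac{d}{dY}]$ be the first Weyl algebra, and for $k\in K$ let $\alpha_k\colon A\to A$ be the $K$-linear map with $\alpha_k(p(Y)X^m)=p(Y+k)X^m$ for all $p(Y)\in K[Y]$, $m\in\mathbb{N}$. Define $u*v:=\alpha_k(u\cdot v)$ for $u,v\in A$. Then for every $k\in K$ the hom-associative algebra $(A,*,\alpha_k)$ is simple, i.e. its only two-sided ideals (with respect to $*$) are $0$ and $A$.
   Context: The first Weyl algebra $A=K[Y][X;\mathrm{id}_{K[Y]},\frac{d}{dY}]$ consists of the polynomials $\sum_{i}p_i(Y)X^i$ with $p_i\in K[Y]$, with the associative multiplication determined by $p(Y)X^m\cdot q(Y)X^n=\sum_{i=0}^m\binom{m}{i}p(Y)q^{(m-i)}(Y)X^{i+n}$ (so $XY-YX=1$). $\mathbb{N}$ denotes the non-negative integers. An ideal of $(A,* )$ is an additive subgroup (indeed $K$-subspace) $I$ with $A*I\subseteq I$ and $I*A\subseteq I$. *)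

From HB Require Import structures.
From mathcomp Require Import all_boot all_order all_algebra.
Set Implicit Arguments. Unset Strict Implicit. Unset Printing Implicit Defensive.
Import GRing.Theory.
Local Open Scope ring_scope.

(* The first Weyl algebra A = K[Y][X; id, d/dY] is represented (as a K-vector
   space) by {poly {poly K}}: an element  sum_i p_i(Y) X^i  is the polynomial
   in the outer variable X whose i-th coefficient is p_i in {poly K}.
   The multiplication is NOT the one of {poly {poly K}}, but the Weyl product:
   p(Y) X^m . q(Y) X^n = sum_{i=0}^m C(m,i) p q^{(m-i)} X^{i+n}, extended
   bilinearly. *)
Definition weyl_mul (K : fieldType) (u v : {poly {poly K}}) : {poly {poly K}} :=
  \sum_(m < size u) \sum_(n < size v) \sum_(i < m.+1)
     ((('C(m, i))%:R * u`_m * (v`_n)^`(m - i))%:P * 'X^(i + n)).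

Definition weyl_alpha (K : fieldType) (k : K) (u : {poly {poly K}}) : {poly {poly K}} :=
  map_poly (fun p : {poly K} => p \Po ('X + k%:P)) u.

Definition hom_mul (K : fieldType) (k : K) (u v : {poly {poly K}}) : {poly {poly K}} :=
  weyl_alpha k (weyl_mul u v).

Definition hom_ideal (K : fieldType) (k : K) (I : pred {poly {poly K}}) : Prop :=
  [/\ 0 \in I,
      (forall x y, x \in I -> y \in I -> x - y \in I),
      (forall a x, x \in I -> hom_mul k a x \in I)
    & (forall a x, x \in I -> hom_mul k x a \in I)].

From HB Require Import structures.
From mathcomp Require Import all_boot all_order all_algebra.
From mathcomp Require Import zify ring.
From Stdlib Require Import Classical.
Set Implicit Arguments. Unset Strict Implicit. Unset Printing Implicit Defensive.
Import GRing.Theory.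
Local Open Scope ring_scope.

(* In the Weyl algebra u.Y - Y.u = d/dX u and X.q(Y) - q(Y).X = q'(Y), so
   since alpha_k is additive, the *-commutators u*Y - Y*u = alpha_k (d/dX u)
   and X*q - q*X = q'(Y + k) stay in any *-ideal.  In characteristic zero each
   lowers the relevant degree by exactly one, so from a nonzero element of the
   ideal we reach a nonzero scalar c; then alpha_k (alpha_{-k}(b) c^-1 . c) = b
   puts every b in the ideal. *)

Lemma size_deriv_pchar0 (R : idomainType) (p : {poly R}) :
  [pchar R] =i pred0 -> size p^`() = (size p).-1.
Proof.
move=> charR0; have [->|p0] := eqVneq p 0; first by rewrite deriv0 size_poly0.
apply/eqP; rewrite eqn_leq -ltnS prednK ?size_poly_gt0 // lt_size_deriv //=.
case sp: (size p) => [|[|n]] //=.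
have : p^`()`_n != 0.
  rewrite coef_deriv -mulr_natr mulf_eq0 negb_or (pcharf0P _).1 //.
  by have := lead_coef_eq0 p; rewrite lead_coefE sp (negbTE p0) /= => ->.
by apply: contraR; rewrite -ltnNge ltnS => /(nth_default 0) ->.
Qed.

Lemma descend_to_nonzero_const (R : nzRingType) (P : {poly R} -> Prop)
    (f : {poly R} -> {poly R}) :
  (forall p : {poly R}, (1 < size p)%N -> P p -> P (f p) /\ size (f p) = (size p).-1) ->
  forall p : {poly R}, P p -> p != 0 -> exists2 c, c != 0 & P c%:P.
Proof.
move=> Pf p; move: {2}(size p) (leqnn (size p)) => n; elim: n p => [|n IHn] p sp Pp p0.
  by move: p0; rewrite -size_poly_eq0 -leqn0 sp.
have [sp1|sp1] := leqP (size p) 1.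
  move/size1_polyC: sp1 => pE.
  exists p`_0; last by rewrite -pE.
  by rewrite -polyC_eq0 -pE; apply: p0.
have [Pfp sfp] := Pf p sp1 Pp.
apply: IHn Pfp _; first by rewrite sfp; lia.
by rewrite -size_poly_eq0 sfp; lia.
Qed.

Lemma map_poly_sumE (R : nzRingType) (f : R -> R) (p : {poly R}) : f 0 = 0 ->
  \sum_(n < size p) (f p`_n)%:P * 'X^n = map_poly f p.
Proof.
by move=> f0; rewrite /map_poly poly_def; apply: eq_bigr => i _; rewrite mul_polyC.
Qed.

Lemma poly_sumE (R : nzRingType) (p : {poly R}) :
  \sum_(n < size p) (p`_n)%:P * 'X^n = p.
Proof. by rewrite (map_poly_sumE (f := id)) // map_poly_id. Qed.

Section WeylProduct.
Variable K : fieldType.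
Implicit Types u v : {poly {poly K}}.

Local Notation Y := (('X : {poly K})%:P).

Lemma weyl_mulYl v : weyl_mul Y v = Y * v.
Proof.
rewrite /weyl_mul size_polyC polyX_eq0 /= big_ord1.
rewrite -[in RHS](poly_sumE v) mulr_sumr; apply: eq_bigr => n _.
by rewrite big_ord1 coefC /= bin0 mul1r polyCM add0n mulrA.
Qed.

Lemma weyl_mulXl v : weyl_mul 'X v = map_poly (@deriv _) v + 'X * v.
Proof.
rewrite /weyl_mul size_polyX big_ord_recl big_ord1 /=.
rewrite big1 ?add0r; last first.
  by move=> n _; rewrite big_ord1 coefX /= mulr0 mul0r polyC0 mul0r.
rewrite -(map_poly_sumE v (f := @deriv _)) ?derivC //.
rewrite -[in X in _ = _ + X](poly_sumE v) mulr_sumr -big_split /=.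
apply: eq_bigr => n _; rewrite big_ord_recl big_ord1 /= coefX /= /bump /=.
by rewrite bin0 binn !mulr1 !mul1r add0n add1n exprS mulrCA.
Qed.

Lemma weyl_mul_polyCr u (c : {poly K}) : c != 0 -> weyl_mul u c%:P =
  \sum_(m < size u) \sum_(i < m.+1) ('C(m, i)%:R * u`_m * c^`(m - i))%:P * 'X^i.
Proof.
move=> c0; rewrite /weyl_mul size_polyC c0; apply: eq_bigr => m _.
by rewrite big_ord1; apply: eq_bigr => i _; rewrite coefC /= addn0.
Qed.

Lemma weyl_mulYr u : weyl_mul u Y = u * Y + u^`().
Proof.
rewrite weyl_mul_polyCr ?polyX_eq0 //.
rewrite -[in RHS](poly_sumE u) mulr_suml raddf_sum -big_split /=.
apply: eq_bigr => m _; rewrite derivM derivC mul0r add0r derivXn.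
case: (nat_of_ord m) => [|m'].
  by rewrite big_ord1 /= bin0 mulr0n mulr0 addr0 mul1r polyCM !expr0 !mulr1 mulrC.
rewrite big_ord_recr big_ord_recr /= big1 ?add0r; last first.
  move=> i _; rewrite -(expr1 'X) derivnXn ffact_small ?mulr0n ?mulr0 ?polyC0 ?mul0r //.
  by have := ltn_ord i; lia.
rewrite subSnn subnn binSn binn derivn1 derivX derivn0 mulr1 !mul1r.
by rewrite !polyCM polyC_natr exprS; ring.
Qed.

Lemma weyl_mulCr u (c : K) : weyl_mul u (c%:P)%:P = u * (c%:P)%:P.
Proof.
have [->|c0] := eqVneq c 0.
  by rewrite /weyl_mul !polyC0 size_poly0 mulr0; apply: big1 => m _; rewrite big_ord0.
rewrite weyl_mul_polyCr ?polyC_eq0 // -[in RHS](poly_sumE u) mulr_suml.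
apply: eq_bigr => m _; rewrite big_ord_recr /= big1 ?add0r; last first.
  by move=> i _; rewrite derivnC subn_eq0 leqNgt ltn_ord /= mulr0 polyC0 mul0r.
by rewrite subnn derivn0 binn mul1r polyCM mulrAC.
Qed.

Lemma weyl_mulXr u : weyl_mul u 'X = u * 'X.
Proof.
rewrite /weyl_mul size_polyX -[in RHS](poly_sumE u) mulr_suml.
apply: eq_bigr => m _; rewrite big_ord_recl big_ord1 /= big1 ?add0r; last first.
  move=> i _; rewrite coefX /= -polyC0 derivnC.
  by case: ifP; rewrite !(mulr0, polyC0, mul0r).
rewrite big_ord_recr /= big1 ?add0r; last first.
  move=> i _; rewrite coefX /= -polyC1 derivnC subn_eq0 leqNgt ltn_ord /=.
  by rewrite mulr0 polyC0 mul0r.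
rewrite coefX /= subnn derivn0 binn !mulr1 mul1r /bump /= add1n addn1 exprS.
by rewrite (mulrC 'X) mulrA.
Qed.

Lemma weyl_commY u : weyl_mul u Y - weyl_mul Y u = u^`().
Proof. by rewrite weyl_mulYr weyl_mulYl mulrC addrAC subrr add0r. Qed.

Lemma weyl_commX v : weyl_mul 'X v - weyl_mul v 'X = map_poly (@deriv _) v.
Proof. by rewrite weyl_mulXl weyl_mulXr mulrC addrK. Qed.

End WeylProduct.

Section Shift.
Variables (K : fieldType) (k : K).
Implicit Types u v : {poly {poly K}}.

Lemma weyl_alphaB u v : weyl_alpha k (u - v) = weyl_alpha k u - weyl_alpha k v.
Proof. exact: raddfB. Qed.

Lemma weyl_alphaC (q : {poly K}) : weyl_alpha k q%:P = (q \Po ('X + k%:P))%:P.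
Proof. exact: map_polyC. Qed.

Lemma size_weyl_alpha u : size (weyl_alpha k u) = size u.
Proof.
have [->|u0] := eqVneq u 0; first by rewrite /weyl_alpha map_poly0.
apply: size_map_poly_id0; rewrite -size_poly_eq0 size_comp_poly2 ?size_XaddC //.
by rewrite size_poly_eq0 lead_coef_eq0.
Qed.

Lemma weyl_alphaK u : weyl_alpha k (weyl_alpha (- k) u) = u.
Proof.
rewrite /weyl_alpha -map_poly_comp_id0 ?comp_poly0 //; apply/polyP => i.
rewrite coef_map_id0 ?comp_poly0 //=; last by rewrite !comp_poly0.
by have := comp_polyXaddC_K u`_i (- k); rewrite polyCN opprK -polyCN.
Qed.

End Shift.

Section HomIdeal.
Variables (K : fieldType) (k : K) (I : pred {poly {poly K}}).
Hypothesis hI : hom_ideal k I.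

Lemma hom_idealB x y : x \in I -> y \in I -> x - y \in I.
Proof. by case: hI => _ subI _ _; apply: subI. Qed.

Lemma hom_ideal_derivX x : x \in I -> weyl_alpha k x^`() \in I.
Proof.
case: hI => _ _ mulIl mulIr xI.
by rewrite -weyl_commY weyl_alphaB; apply: hom_idealB; [exact: mulIr | exact: mulIl].
Qed.

Lemma hom_ideal_derivY (q : {poly K}) :
  q%:P \in I -> (q^`() \Po ('X + k%:P))%:P \in I.
Proof.
case: hI => _ _ mulIl mulIr qI.
rewrite -weyl_alphaC -map_polyC -weyl_commX weyl_alphaB.
by apply: hom_idealB; [exact: mulIl | exact: mulIr].
Qed.

Lemma hom_ideal_full (c : K) : c != 0 -> (c%:P)%:P \in I -> forall b, b \in I.
Proof.
case: hI => _ _ mulIl _ c0 cI b.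
have := mulIl (weyl_alpha (- k) b * ((c^-1)%:P)%:P) _ cI.
by rewrite /hom_mul weyl_mulCr -mulrA -!polyCM mulVf // mulr1 weyl_alphaK.
Qed.

Hypothesis charK0 : [pchar K] =i pred0.

Lemma hom_ideal_nonzero_const x : x \in I -> x != 0 ->
  exists2 c : K, c != 0 & (c%:P)%:P \in I.
Proof.
have charKY0 : [pchar {poly K}] =i pred0 by move=> p; rewrite pchar_poly charK0.
move=> xI x0; have [q q0 qI] : exists2 q : {poly K}, q != 0 & q%:P \in I.
  apply: (descend_to_nonzero_const (P := fun x => x \in I)
                                   (f := fun x => weyl_alpha k x^`())) xI x0.
  by move=> y _ yI; rewrite size_weyl_alpha size_deriv_pchar0 // hom_ideal_derivX.
apply: (descend_to_nonzero_const (P := fun q => q%:P \in I)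
                                 (f := fun q => q^`() \Po ('X + k%:P))) qI q0.
move=> p _ pI; rewrite size_comp_poly2 ?size_XaddC // size_deriv_pchar0 //.
by rewrite hom_ideal_derivY.
Qed.

End HomIdeal.

Theorem mainTheorem11 (K : fieldType) (charK0 : [pchar K] =i pred0) (k : K)
  (I : pred {poly {poly K}}) (hI : hom_ideal k I) :
  (forall x, x \in I -> x = 0) \/ (forall x, x \in I).
Proof.
have [[x xI x0]|noI] := classic (exists2 x, x \in I & x != 0).
  have [c c0 cI] := hom_ideal_nonzero_const hI charK0 xI x0.
  by right; apply: (hom_ideal_full hI c0 cI).
left=> x xI; apply/eqP; apply: contraT => x0.
by case: noI; exists x.
Qed.
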